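(* In the setting described in the context, let $G\in R_w$ and $H\in R_z$ ($w,z\in\mathbb{Z}^{n-1}_{\ge0}$) be coprime polynomials. If $G$ is not divisible by any monomial (of positive degree), then for every $i\in M$ one has $G\,R_{z+i}+H\,R_{w+i}=R_{w+z+i}$.
   Context: Let $\mathbb{K}$ be a field. A Newton polyhedron is the convex hull of $S+\mathbb{R}^n_{\ge0}$ for a nonempty finite $S\subset\mathbb{Z}^n_{\ge0}$; for $\xi\in\mathbb{R}^n_{\ge0}$ the face $\Delta^\xi=\{a\in\Delta:\langle\xi,a\rangle=\min_{b\in\Delta}\langle\xi,b\rangle\}$ is compact iff $\xi\in\mathbb{R}^n_{>0}$; a loose edge is a compact 1-dimensional face not contained in any compact face of dimension $\ge2$. Let $\Delta$ be a Newton polyhedron with a loose edge $E$, let $c\in\mathbb{Z}^n$ be a primitive lattice vector parallel to $E$, and let $\xi_1,\dots,\xi_{n-1}\in\mathbb{Z}^n_{\ge0}$ be linearly independent vectors with $\langle\xi_i,c\rangle=0$. For $\alpha\in\mathbb{Z}^n$ put $\omega(\underline x^\alpha)=(\langle\xi_1,\alpha\rangle,\dots,\langle\xi_{n-1},\alpha\rangle)$. For $w\in\mathbb{Z}^{n-1}_{\ge0}$ let $R_w\subset\mathbb{K}[x_1,\dots,x_n]$ be the $\mathbb{K}$-span of monomials $\underline x^\alpha$, $\alpha\in\mathbb{Z}^n_{\ge0}$, with $\omega(\underline x^\alpha)=w$. Let $M$ be the set of $z\in\mathbb{Z}^{n-1}_{\ge0}$ for which there is $\alpha\in\mathbb{Z}^n$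 with $\omega(\underline x^\alpha)=z$ and $\langle\xi,\alpha\rangle\ge0$ for all $\xi\in\mathbb{R}^n_{\ge0}$ orthogonal to $E$. *)

From HB Require Import structures.
From mathcomp Require Import all_boot all_order all_algebra.
From mathcomp Require Import reals.
From mathcomp Require Import mpoly.
Set Implicit Arguments. Unset Strict Implicit. Unset Printing Implicit Defensive.
Import Order.TTheory GRing.Theory Num.Theory.
Local Open Scope ring_scope.

Section Geometry.
Variables (R : realType) (n : nat).

Definition dotR (x y : 'I_n -> R) : R := \sum_(k < n) x k * y k.

Definition convex_hull (A : ('I_n -> R) -> Prop) (a : 'I_n -> R) : Prop :=
  exists (m : nat) (lam : 'I_m -> R) (p : 'I_m -> 'I_n -> R),
    [/\ (forall j, 0 <= lam j), \sum_(j < m) lam j = 1,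
        (forall j, A (p j)) & (forall k, a k = \sum_(j < m) lam j * p j k)].

Definition shifted_orthant (S : seq {ffun 'I_n -> nat}) (a : 'I_n -> R) : Prop :=
  exists2 s, s \in S & forall k, (s k)%:R <= a k.

Definition newton_polyhedron (S : seq {ffun 'I_n -> nat}) :=
  convex_hull (shifted_orthant S).

Definition face (D : ('I_n -> R) -> Prop) (xi : 'I_n -> R) (a : 'I_n -> R) : Prop :=
  D a /\ forall b, D b -> dotR xi a <= dotR xi b.

Definition is_face (D F : ('I_n -> R) -> Prop) : Prop :=
  exists xi : 'I_n -> R, (forall k, 0 <= xi k) /\ forall a, F a <-> face D xi a.

Definition bounded (F : ('I_n -> R) -> Prop) : Prop :=
  exists B : R, forall a, F a -> forall k, `|a k| <= B.

Definition aff_indep3 (a b c : 'I_n -> R) : Prop :=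
  forall s t : R, (forall k, s * (b k - a k) + t * (c k - a k) = 0) -> s = 0 /\ t = 0.

Definition dim_ge2 (F : ('I_n -> R) -> Prop) : Prop :=
  exists a b c, [/\ F a, F b, F c & aff_indep3 a b c].

Definition dim_ge1 (F : ('I_n -> R) -> Prop) : Prop :=
  exists a b, [/\ F a, F b & a <> b].

Definition loose_edge (D E : ('I_n -> R) -> Prop) : Prop :=
  [/\ is_face D E, bounded E, dim_ge1 E, ~ dim_ge2 E &
      forall F, is_face D F -> bounded F -> (forall a, E a -> F a) -> ~ dim_ge2 F].

Definition parallel (E : ('I_n -> R) -> Prop) (c : 'I_n -> int) : Prop :=
  forall a b, E a -> E b -> exists t : R, forall k, b k - a k = t * (c k)%:~R.

Definition orth_to (E : ('I_n -> R) -> Prop) (xi : 'I_n -> R) : Prop :=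
  forall a b, E a -> E b -> dotR xi (fun k => a k - b k) = 0.

Definition inM (E : ('I_n -> R) -> Prop) (xis : 'I_n.-1 -> 'I_n -> nat)
    (z : 'I_n.-1 -> nat) : Prop :=
  exists alpha : 'I_n -> int,
    (forall i, \sum_(k < n) (xis i k)%:Z * alpha k = (z i)%:Z) /\
    (forall xi : 'I_n -> R, (forall k, 0 <= xi k) -> orth_to E xi ->
       0 <= \sum_(k < n) xi k * (alpha k)%:~R).

Definition lin_indep (xis : 'I_n.-1 -> 'I_n -> nat) : Prop :=
  forall lam : 'I_n.-1 -> R,
    (forall k, \sum_(i < n.-1) lam i * (xis i k)%:R = 0) -> forall i, lam i = 0.

End Geometry.

Definition primitive (n : nat) (c : 'I_n -> int) : Prop :=
  forall d : int, (forall k, (d %| c k)%Z) -> `|d| = 1.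

Section Polys.
Variables (K : fieldType) (n : nat).

Definition omega (xis : 'I_n.-1 -> 'I_n -> nat) (m : 'X_{1..n}) : 'I_n.-1 -> nat :=
  fun i => (\sum_(k < n) xis i k * m k)%N.

(* p belongs to R_w, the K-span of monomials x^m with omega(x^m) = w *)
Definition in_Rw (xis : 'I_n.-1 -> 'I_n -> nat) (w : 'I_n.-1 -> nat)
    (p : {mpoly K[n]}) : Prop :=
  forall m, m \in msupp p -> forall i, omega xis m i = w i.

Definition mdivides (d p : {mpoly K[n]}) : Prop := exists q, p = d * q.

Definition mcoprime (G H : {mpoly K[n]}) : Prop :=
  forall d, mdivides d G -> mdivides d H -> exists e, d * e = 1.

Definition no_monomial_factor (G : {mpoly K[n]}) : Prop :=
  forall m : 'X_{1..n}, (0 < mdeg m)%N -> ~ mdivides 'X_[m] G.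

End Polys.

(* Since the xi_i are independent and orthogonal to the primitive vector c, the
   monomials of a fixed omega-degree lie on one line of direction c.  Hence every
   element of R_w is x^r times the homogenization
     homogenize N f = sum_j f_j x^(j c+ + (N - j) c-)
   of a univariate polynomial f, where c = c+ - c- splits c into its positive and
   negative parts.  A G without monomial factor is homogenize d g with g(0) <> 0, and
   H = x^eta * homogenize e h; any common factor of g and h would homogenize to a
   common nonunit factor of G and H, so g and h are coprime.  For i in M, the
   integer point alpha given by the definition of M can be moved along c to a
   nonnegative point beta = alpha + c- + k c, a monomial of degree i + omega(c-).
   Finally each monomial of degree w + z + i is x^r * homogenize N X^k, and a
   univariate Bezout identity X^k = g A + X^s h B with deg B < d homogenizes to
   the required decomposition. *)

From HB Require Import structures.
From mathcomp Require Import all_boot all_order all_algebra.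
From mathcomp Require Import reals.
From mathcomp Require Import mpoly.
From mathcomp Require Import zify ring.
Set Implicit Arguments. Unset Strict Implicit. Unset Printing Implicit Defensive.
Import Order.TTheory GRing.Theory Num.Theory.
Local Open Scope ring_scope.

Lemma Posz_sum (I : Type) (r : seq I) (P : pred I) (F : I -> nat) :
  Posz (\sum_(i <- r | P i) F i)%N = \sum_(i <- r | P i) (F i)%:Z.
Proof. exact: (big_morph Posz PoszD (erefl _)). Qed.

Lemma seq_argmin (T : eqType) (s : seq T) (f : T -> int) : s != [::] ->
  exists2 x, x \in s & forall y, y \in s -> f x <= f y.
Proof.
elim: s => // a s IH _; case: (eqVneq s [::]) => [->|/IH [x xs hx]].
  by exists a => [|y]; rewrite ?mem_seq1 ?inE // => /eqP ->.
case: (lerP (f a) (f x)) => h.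
  by exists a => [|y]; rewrite ?inE ?eqxx // => /orP[/eqP -> //|/hx]; apply: le_trans.
exists x => [|y]; first by rewrite inE xs orbT.
by rewrite inE => /orP[/eqP ->|/hx //]; apply: ltW.
Qed.

Lemma int_between (I : finType) (P Q : pred I) (l u : I -> int) :
  (forall p q, P p -> Q q -> l p <= u q) ->
  exists k, (forall p, P p -> l p <= k) /\ (forall q, Q q -> k <= u q).
Proof.
move=> hlu; pose B := - \sum_q `|u q|.
have B_le q : B <= u q.
  rewrite /B lerNl (le_trans (ler_norm _)) // normrN (bigD1 q) //= lerDl.
  by rewrite sumr_ge0.
exists (\big[Order.max/B]_(p | P p) l p); split=> [p Pp|q Qq].
  exact: le_bigmax_cond.
by apply: bigmax_le => // p Pp; apply: hlu.
Qed.

Lemma sumr_pred1_mul (R : pzSemiRingType) n (p : 'I_n) (y : 'I_n -> R) :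
  \sum_(k < n) (k == p)%:R * y k = y p.
Proof.
by rewrite (bigD1 p) //= eqxx mul1r big1 ?addr0 // => k /negbTE ->; rewrite mul0r.
Qed.

Section PrimitiveVector.
Variables (n : nat) (c : 'I_n -> int).
Hypothesis c_prim : primitive c.

Lemma primitive_neq0 : exists k, c k != 0.
Proof.
apply/existsP; apply: contraT; rewrite negb_exists => /forallP c0.
suff : `|0 : int| = 1 by rewrite normr0.
by apply: c_prim => k; rewrite (eqP (negbNE (c0 k))) dvdz0.
Qed.

(* If [a'/b'] is [dl k0 / c k0] in lowest terms, then [b'] divides every [c j], so [b' = ±1]. *)
Lemma primitive_proportional (dl : 'I_n -> int) k0 : c k0 != 0 ->
  (forall j, dl j * c k0 = dl k0 * c j) -> exists t : int, forall j, dl j = t * c j.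
Proof.
move=> ck0 h; set a := dl k0; set b := c k0; set g := gcdz a b.
have gnz : g != 0 by rewrite gcdz_eq0 negb_and ck0 orbT.
have [u [v huv]] := Bezoutz a b.
set a' := (a %/ g)%Z; set b' := (b %/ g)%Z.
have ea : a = a' * g by rewrite divzK // dvdz_gcdl.
have eb : b = b' * g by rewrite divzK // dvdz_gcdr.
have uv1 : u * a' + v * b' = 1.
  by apply: (mulIf gnz); rewrite mul1r mulrDl -!mulrA -ea -eb.
have hj j : a' * c j = b' * dl j.
  apply: (mulIf gnz); have := h j; rewrite -/a -/b ea eb => e.
  by rewrite mulrAC -e; ring.
have b'_dvd j : (b' %| c j)%Z.
  apply/dvdzP; exists (u * dl j + v * c j).
  transitivity ((u * a' + v * b') * c j); first by rewrite uv1 mul1r.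
  by rewrite mulrDl -mulrA hj; ring.
have b'_sq : b' * b' = 1.
  by rewrite -expr2 -real_normK ?num_real // (c_prim b'_dvd) expr1n.
by exists (b' * a') => j; rewrite -mulrA hj mulrA b'_sq mul1r.
Qed.

End PrimitiveVector.

Section Omega.
Variables (n : nat) (xis : 'I_n.-1 -> 'I_n -> nat).

Lemma omegaD m1 m2 i : omega xis (m1 + m2)%MM i = (omega xis m1 i + omega xis m2 i)%N.
Proof. by rewrite /omega -big_split; apply: eq_bigr => k _; rewrite mnmDE mulnDr. Qed.

Lemma omegaMn m j i : omega xis (m *+ j)%MM i = (omega xis m i * j)%N.
Proof. by rewrite /omega big_distrl; apply: eq_bigr => k _; rewrite mulmnE mulnA. Qed.

Lemma omega0 i : omega xis 0%MM i = 0%N.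
Proof. by rewrite /omega big1 // => k _; rewrite mnm0E muln0. Qed.

Definition xis_mx (R : realType) : 'M[R]_(n.-1, n) := \matrix_(i, k) (xis i k)%:R.

Lemma lin_indep_row_free (R : realType) : lin_indep R xis -> row_free (xis_mx R).
Proof.
move=> li; rewrite -kermx_eq0; apply/eqP/row_matrixP => i; rewrite row0.
set lam := row i (kermx _).
have lamX : lam *m xis_mx R = 0 by rewrite -row_mul mulmx_ker row0.
apply/rowP => j; rewrite [RHS]mxE; apply: (li (fun i => lam 0 i)) => k.
have := congr1 (fun M : 'rV[R]_n => M 0 k) lamX; rewrite !mxE => e.
by rewrite -[RHS]e; apply: eq_bigr => l _; congr (_ * _); rewrite mxE.
Qed.

(* The [n - 1] independent rows leave a one-dimensional kernel, which contains [c]. *)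
Lemma lin_indep_orthogonal_line (R : realType) (c dl : 'I_n -> int) :
  lin_indep R xis -> (exists k, c k != 0) ->
  (forall i, \sum_(k < n) (xis i k)%:Z * c k = 0) ->
  (forall i, \sum_(k < n) (xis i k)%:Z * dl k = 0) ->
  exists t : R, forall j, (dl j)%:~R = t * (c j)%:~R.
Proof.
move=> li [k0 ck0] hc hd; set X := xis_mx R.
have rank_ker : \rank (kermx X^T) = 1%N.
  rewrite mxrank_ker mxrank_tr (eqP (lin_indep_row_free li)).
  by case: (k0) => k /=; lia.
have in_ker (v : 'I_n -> int) : (forall i, \sum_(k < n) (xis i k)%:Z * v k = 0) ->
    ((\row_k (v k)%:~R : 'rV[R]_n) <= kermx X^T)%MS.
  move=> hv; apply/sub_kermxP/rowP => i; rewrite !mxE.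
  have := congr1 (fun x : int => (x%:~R : R)) (hv i); rewrite rmorph_sum mulr0z => e.
  by rewrite -[RHS]e; apply: eq_bigr => k _; rewrite !mxE rmorphM mulrC.
have c_row_neq0 : (\row_k (c k)%:~R : 'rV[R]_n) != 0.
  by apply: contra ck0 => /eqP /rowP /(_ k0); rewrite !mxE => /eqP; rewrite intr_eq0.
have ker_sub_c : (kermx X^T <= \row_k (c k)%:~R)%MS.
  have [_] := mxrank_leqif_eq (in_ker _ hc).
  by rewrite rank_ker rank_rV c_row_neq0 eqxx => /esym/andP[].
have [t ht] := sub_rVP (submx_trans (in_ker _ hd) ker_sub_c).
by exists t => j; have := congr1 (fun M : 'rV[R]_n => M 0 j) ht; rewrite !mxE.
Qed.

Lemma omega_eq_line (R : realType) (c : 'I_n -> int) :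
  lin_indep R xis -> primitive c -> (forall i, \sum_(k < n) (xis i k)%:Z * c k = 0) ->
  forall m1 m2 : 'X_{1..n}, (forall i, omega xis m1 i = omega xis m2 i) ->
  exists t : int, forall j, (m2 j)%:Z = (m1 j)%:Z + t * c j.
Proof.
move=> li pc hc m1 m2 hm.
have [k0 ck0] := primitive_neq0 pc.
pose dl j := (m2 j)%:Z - (m1 j)%:Z.
have hd i : \sum_(k < n) (xis i k)%:Z * dl k = 0.
  have := congr1 Posz (hm i); rewrite /omega !Posz_sum => e.
  by under eq_bigr do rewrite /dl mulrBr; rewrite sumrB -e subrr.
have [t ht] := lin_indep_orthogonal_line li (ex_intro _ k0 ck0) hc hd.
have [s hs] : exists s : int, forall j, dl j = s * c j.
  apply: (@primitive_proportional _ _ pc dl k0 ck0) => j.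
  by apply: (@intr_inj R); rewrite !rmorphM /= !ht; ring.
by exists s => j; rewrite -hs /dl addrC subrK.
Qed.

End Omega.

Section Homogenization.
Variables (K : fieldType) (n : nat) (c : 'I_n -> int).

Definition cplus : 'X_{1..n} := [multinom (if (0 <= c k)%R then `|c k|%N else 0%N) | k < n].
Definition cminus : 'X_{1..n} := [multinom (if (c k < 0)%R then `|c k|%N else 0%N) | k < n].

Lemma cplus_cminus_case k :
  ((cplus k)%:Z = c k /\ cminus k = 0%N) \/ (cplus k = 0%N /\ (cminus k)%:Z = - c k).
Proof.
rewrite /cplus /cminus !mnmE; case: (lerP 0 (c k)) => h; [left|right].
  by rewrite gez0_abs.
by rewrite ltz0_abs.
Qed.

Lemma cplus_cminusE k : (cplus k)%:Z - (cminus k)%:Z = c k.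
Proof. by case: (cplus_cminus_case k) => -[-> ->]; rewrite ?subr0 ?sub0r ?opprK. Qed.

(* [homogenize N f] is the binary form of degree [N] in [x^cplus] and [x^cminus]
   that dehomogenizes to [f]. *)
Definition homogenize_mon (r : 'X_{1..n}) N j : 'X_{1..n} :=
  (r + (cplus *+ j + cminus *+ (N - j)))%MM.

Definition homogenize N (f : {poly K}) : {mpoly K[n]} :=
  \sum_(j < N.+1) f`_j *: 'X_[homogenize_mon 0 N j].

Fact homogenize_is_linear N : linear (homogenize N).
Proof.
move=> a f g; rewrite /homogenize scaler_sumr -big_split /=; apply: eq_bigr => j _.
by rewrite coefD coefZ scalerDl scalerA.
Qed.

HB.instance Definition _ N :=
  GRing.isLinear.Build K {poly K} {mpoly K[n]} _ (homogenize N) (homogenize_is_linear N).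

Lemma homogenizeXn N j : (j <= N)%N -> homogenize N 'X^j = 'X_[homogenize_mon 0 N j].
Proof.
move=> jN; rewrite /homogenize (bigD1 (Ordinal (jN : j < N.+1)%N)) //= coefXn eqxx scale1r.
rewrite big1 ?addr0 // => i /eqP ne; rewrite coefXn.
by case: eqP => [e|_]; [case: ne; apply: val_inj | rewrite scale0r].
Qed.

Lemma mulX_homogenizeXn r N j : (j <= N)%N ->
  'X_[r] * homogenize N 'X^j = 'X_[homogenize_mon r N j].
Proof. by move=> jN; rewrite homogenizeXn // -mpolyXD /homogenize_mon add0m. Qed.

Lemma poly_sum_coef (f : {poly K}) N : (size f <= N)%N -> f = \sum_(i < N) f`_i *: 'X^i.
Proof.
move=> sf; rewrite -poly_def; apply/polyP => i; rewrite coef_poly.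
by case: ltnP => // h; rewrite nth_default // (leq_trans sf h).
Qed.

Lemma homogenizeM N1 N2 (f1 f2 : {poly K}) :
  (size f1 <= N1.+1)%N -> (size f2 <= N2.+1)%N ->
  homogenize N1 f1 * homogenize N2 f2 = homogenize (N1 + N2)%N (f1 * f2).
Proof.
move=> s1 s2; rewrite [in RHS](poly_sum_coef s1) [in RHS](poly_sum_coef s2).
rewrite [in RHS]mulr_suml linear_sum {1}/homogenize mulr_suml; apply: eq_bigr => i _.
rewrite [in RHS]mulr_sumr linear_sum {1}/homogenize mulr_sumr; apply: eq_bigr => j _.
rewrite -scalerAl -scalerAr scalerA -scalerAl -scalerAr scalerA -exprD linearZ_LR /=.
rewrite homogenizeXn; last first.
  by have := ltn_ord i; have := ltn_ord j; lia.
rewrite -mpolyXD; congr (_ *: 'X_[_]); apply/mnmP => k; rewrite !mnmDE !mulmnE !mnm0E.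
have := ltn_ord i; have := ltn_ord j; rewrite !ltnS => hj hi.
have -> : (N1 + N2 - (i + j) = (N1 - i) + (N2 - j))%N by lia.
ring.
Qed.

Lemma mulX_homogenizeE r N f :
  'X_[r] * homogenize N f = \sum_(j < N.+1) f`_j *: 'X_[homogenize_mon r N j].
Proof.
rewrite /homogenize mulr_sumr; apply: eq_bigr => j _.
by rewrite -scalerAr -mpolyXD /homogenize_mon add0m.
Qed.

Lemma homogenize0 (f : {poly K}) : homogenize 0 f = (f`_0)%:MP.
Proof.
rewrite /homogenize big_ord1 -alg_mpolyC -mpolyX0; congr (_ *: 'X_[_]).
by apply/mnmP => k; rewrite !mnmDE !mulmnE !muln0.
Qed.

Lemma homogenize_dvdp D N (q f : {poly K}) : size q = D.+1 -> q %| f ->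
  (size f <= N.+1)%N -> f != 0 ->
  (D <= N)%N /\ homogenize N f = homogenize D q * homogenize (N - D)%N (f %/ q).
Proof.
move=> sq qf sf fnz; have qnz : q != 0 by rewrite -size_poly_eq0 sq.
have ef := divpK qf; have f'nz : f %/ q != 0 by apply: contra fnz => /eqP e; rewrite -ef e mul0r.
have := size_mul f'nz qnz; rewrite ef sq => sz; rewrite sz in sf.
have := size_poly_gt0 (f %/ q); rewrite f'nz; move: sf; set z := size _ => sf z_gt0.
have DN : (D <= N)%N by lia.
have sf' : (z <= (N - D).+1)%N by lia.
by split=> //; rewrite homogenizeM ?sq // (subnKC DN) mulrC ef.
Qed.

Lemma homogenize_lift d e (g h A B : {poly K}) k s N (r eta beta : 'X_{1..n}) :
  (0 < d)%N -> size g = d.+1 -> (size h <= e.+1)%N -> (size B <= d)%N ->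
  (k <= N)%N -> (s + (d.-1 + e) <= N)%N ->
  'X^k = g * A + 'X^s * h * B -> A = 0 \/ ((d <= N)%N /\ (size A <= (N - d).+1)%N) ->
  (eta + beta)%MM = homogenize_mon r (N - (d.-1 + e)) s ->
  'X_[homogenize_mon r N k] =
    homogenize d g * ('X_[r] * homogenize (N - d) A)
    + ('X_[eta] * homogenize e h) * ('X_[beta] * homogenize d.-1 B).
Proof.
move=> d_gt0 sg sh sB kN sN eX hA em.
rewrite -mulX_homogenizeXn // eX raddfD /= mulrDr; congr (_ + _).
  case: hA => [->|[dN sA]]; first by rewrite !(mulr0, raddf0).
  by rewrite mulrCA homogenizeM ?sg // (subnKC dN).
have shB : (size (h * B)%R <= (d.-1 + e).+1)%N.
  apply: (leq_trans (size_polyMleq _ _)); move: sh sB d_gt0.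
  set x := size h; set y := size B; lia.
have sB' : (size B <= d.-1.+1)%N by rewrite prednK.
have sXs : (size ('X^s : {poly K}) <= (N - (d.-1 + e)).+1)%N by rewrite size_polyXn; lia.
rewrite [RHS]mulrACA -mpolyXD em homogenizeM // [(e + _)%N]addnC -mulX_homogenizeXn.
  by rewrite -[RHS]mulrA homogenizeM // subnK ?mulrA //; lia.
by lia.
Qed.

Lemma homogenize_frame (gam mu : 'X_{1..n}) D0 (t : int) :
  (forall k, (gam k)%:Z = ((mu + cminus *+ D0)%MM k)%:Z + t * c k) ->
  exists r N j s, [/\ (j <= N)%N, (s + D0 <= N)%N,
    gam = homogenize_mon r N j & mu = homogenize_mon r (N - D0) s].
Proof.
move=> ht; have {}ht k : (gam k)%:Z = (mu k + cminus k * D0)%N%:Z + t * c k /\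
    (((cplus k)%:Z = c k /\ cminus k = 0%N) \/
     (cplus k = 0%N /\ (cminus k)%:Z = - c k)).
  by split; [rewrite ht !mnmDE mulmnE | exact: cplus_cminus_case].
have [t_lt0|t_ge0] := ltrP t 0.
  exists (gam - cminus *+ (D0 + `|t|))%MM, (D0 + `|t|)%N, 0%N, `|t|%N; split=> //; try lia.
    apply/mnmP => k; rewrite !mnmDE !mnmBE !mulmnE; have := ht k; nia.
  apply/mnmP => k; rewrite !mnmDE !mnmBE !mulmnE; have := ht k; nia.
exists (mu + cminus *+ D0 - cminus *+ maxn D0 `|t|)%MM, (maxn D0 `|t|), `|t|%N, 0%N.
split; try lia.
  apply/mnmP => k; rewrite !mnmDE !mnmBE !mulmnE !mnmDE !mulmnE; have := ht k; nia.
apply/mnmP => k; rewrite !mnmDE !mnmBE !mulmnE !mnmDE !mulmnE; have := ht k; nia.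
Qed.

Hypothesis c_neq0 : exists k, c k != 0.

Lemma homogenize_mon_inj r N j j' : (j <= N)%N -> (j' <= N)%N ->
  homogenize_mon r N j = homogenize_mon r N j' -> j = j'.
Proof.
move=> hj hj' /mnmP /(_ (xchoose c_neq0)); have := xchooseP c_neq0.
rewrite /homogenize_mon !mnmDE !mulmnE /cplus /cminus !mnmE -absz_gt0.
case: (lerP 0 (c _)) => _ /=; move: `|c _|%N (r _) => a b; nia.
Qed.

Lemma mcoeff_mulX_homogenize r N f j : (j <= N)%N ->
  ('X_[r] * homogenize N f)@_(homogenize_mon r N j) = f`_j.
Proof.
move=> jN; rewrite mulX_homogenizeE raddf_sum (bigD1 (Ordinal (jN : j < N.+1)%N)) //=.
rewrite mcoeffZ mcoeffX eqxx mulr1 big1 ?addr0 // => i /eqP ne.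
rewrite mcoeffZ mcoeffX; case: eqP => [/homogenize_mon_inj e|_]; last by rewrite mulr0.
by case: ne; apply: val_inj; apply: e; rewrite -ltnS.
Qed.

Lemma msupp_mulX_homogenize r N f m : m \in msupp ('X_[r] * homogenize N f) ->
  exists2 j, (j <= N)%N & m = homogenize_mon r N j.
Proof.
rewrite mcoeff_msupp mulX_homogenizeE raddf_sum => nz.
have [j _ hj] : exists2 j : 'I_N.+1, true & ('X_[homogenize_mon r N j] : {mpoly K[n]})@_m != 0.
  apply/exists_inP; apply: contraNT nz; rewrite negb_exists_in => /forall_inP h.
  by apply/eqP/big1 => j _ /=; rewrite mcoeffZ (eqP (negbNE (h j isT))) mulr0.
exists j; first by rewrite -ltnS.
by move: hj; rewrite mcoeffX; case: (homogenize_mon r N j =P m) => [<-|]; rewrite ?eqxx.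
Qed.

Lemma homogenize_unit D (q : {poly K}) : size q = D.+1 -> q`_0 != 0 ->
  (exists u, homogenize D q * u = 1) -> D = 0%N.
Proof.
move=> sq q0 [u hu].
have /andP[/eqP qC _] := mpoly_intro_unit (etrans (mulrC _ _) hu).
have qD : q`_D != 0.
  by have := lead_coef_eq0 q; rewrite lead_coefE sq /= => ->; rewrite -size_poly_eq0 sq.
have mon0 j : (j <= D)%N -> q`_j != 0 -> homogenize_mon 0 D j = 0%MM.
  move=> jD; rewrite -(mcoeff_mulX_homogenize 0 q jD) mpolyX0 mul1r qC mcoeffC.
  by case: (_ =P 0%MM) => // _; rewrite mulr0 eqxx.
by apply: (homogenize_mon_inj (r := 0%MM) (leqnn D) (leq0n D)); rewrite !mon0.
Qed.

Lemma homogenize_coprimep d e (g h : {poly K}) eta :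
  size g = d.+1 -> g`_0 != 0 -> (size h <= e.+1)%N ->
  mcoprime (homogenize d g) ('X_[eta] * homogenize e h) -> coprimep g h.
Proof.
move=> sg g0 sh cop; set q := gcdp g h.
have gnz : g != 0 by rewrite -size_poly_eq0 sg.
have qnz : q != 0 by rewrite gcdp_eq0 negb_and gnz.
have sq : size q = (size q).-1.+1 by rewrite prednK // size_poly_gt0.
have q0 : q`_0 != 0.
  by apply: contra g0 => /eqP q0; rewrite -(divpK (dvdp_gcdl g h)) coef0M q0 mulr0.
rewrite /coprimep -/q sq (homogenize_unit sq q0) //; apply: cop.
  have [_ ->] := homogenize_dvdp sq (dvdp_gcdl g h) (eq_leq sg) gnz; by eexists.
have [->|hnz] := eqVneq h 0; first by exists 0; rewrite raddf0 !mulr0.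
have [_ ->] := homogenize_dvdp sq (dvdp_gcdr g h) sh hnz.
by exists ('X_[eta] * homogenize (e - (size q).-1) (h %/ q)); rewrite mulrCA.
Qed.

End Homogenization.

Section UnivariateBezout.
Variable K : fieldType.
Implicit Types g h p q A B : {poly K}.

Lemma coprimep_divp_decomp g q p : g != 0 -> coprimep g q ->
  exists A B, (size B < size g)%N /\ p = g * A + q * B.
Proof.
move=> gnz /Bezout_eq1_coprimepP [[u v] /= uv1].
set pv := p * v; have eR : pv %% g = pv - pv %/ g * g.
  by rewrite {2}(divp_eq pv g) addrC addKr.
exists (p * u + q * (pv %/ g)), (pv %% g); split; first by rewrite ltn_modp.
by rewrite eR -[LHS]mulr1 -uv1 /pv; ring.
Qed.

Lemma Xn_decomp d e g h k s N :
  (0 < d)%N -> size g = d.+1 -> g`_0 != 0 -> (size h <= e.+1)%N -> coprimep g h ->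
  (k <= N)%N -> (s + (d.-1 + e) <= N)%N ->
  exists A B, [/\ (size B <= d)%N, 'X^k = g * A + 'X^s * h * B &
     A = 0 \/ ((d <= N)%N /\ (size A <= (N - d).+1)%N)].
Proof.
move=> d_gt0 sg g0 sh cgh kN sN; have gnz : g != 0 by rewrite -size_poly_eq0 sg.
have cgX : coprimep g ('X^s * h).
  by rewrite coprimepMr cgh andbT coprimep_expr // coprimepX rootE horner_coef0.
have [A [B [sB eX]]] := coprimep_divp_decomp 'X^k gnz cgX; rewrite sg ltnS in sB.
exists A, B; split=> //; have [->|Anz] := eqVneq A 0; [by left | right].
have : (size (g * A)%R <= N.+1)%N.
  have -> : g * A = 'X^k - 'X^s * h * B by rewrite eX addrK.
  rewrite (leq_trans (size_polyD _ _)) // size_polyN geq_max.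
  rewrite size_polyXn ltnS kN (leq_trans (size_polyMleq _ _)) //.
  have := size_polyMleq 'X^s h; rewrite size_polyXn.
  move: sB sh; set x := size ('X^s * h)%R; set y := size B; set z := size h; lia.
have := size_poly_gt0 A; rewrite size_mul // sg Anz; set y := size A; lia.
Qed.

End UnivariateBezout.

Section Rw.
Variables (K : fieldType) (n : nat) (xis : 'I_n.-1 -> 'I_n -> nat).
Implicit Types (p q : {mpoly K[n]}) (y : 'I_n.-1 -> nat).

Lemma in_Rw0 y : in_Rw xis y (0 : {mpoly K[n]}).
Proof. by move=> m; rewrite mcoeff_msupp raddf0 eqxx. Qed.

Lemma in_RwD y p q : in_Rw xis y p -> in_Rw xis y q -> in_Rw xis y (p + q).
Proof. by move=> hp hq m /msuppD_le; rewrite mem_cat => /orP[/hp|/hq]. Qed.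

Lemma in_RwZ y a p : in_Rw xis y p -> in_Rw xis y (a *: p).
Proof. by move=> hp m /msuppZ_le /hp. Qed.

Lemma in_RwM y1 y2 p q : in_Rw xis y1 p -> in_Rw xis y2 q ->
  in_Rw xis (fun i => y1 i + y2 i)%N (p * q).
Proof.
move=> hp hq m /msuppM_le /allpairsP [[m1 m2] /= [h1 h2 ->]] i.
by rewrite omegaD hp // hq.
Qed.

Lemma in_Rw_eq y1 y2 p : y1 =1 y2 -> in_Rw xis y1 p -> in_Rw xis y2 p.
Proof. by move=> e hp m /hp h i; rewrite h e. Qed.

Lemma in_Rw_X y (m : 'X_{1..n}) :
  (forall i, omega xis m i = y i) -> in_Rw xis y ('X_[m] : {mpoly K[n]}).
Proof. by move=> hm m'; rewrite msuppX mem_seq1 => /eqP ->. Qed.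

Definition Rw_comb (G H : {mpoly K[n]}) (u v : 'I_n.-1 -> nat) p :=
  exists a b, [/\ in_Rw xis u a, in_Rw xis v b & p = G * a + H * b].

Lemma Rw_comb_span G H u v y p :
  (forall m, (forall i, omega xis m i = y i) -> Rw_comb G H u v 'X_[m]) ->
  in_Rw xis y p -> Rw_comb G H u v p.
Proof.
move=> hX hp; rewrite (mpolyE p) big_seq; apply: (big_ind (Rw_comb G H u v)).
- by exists 0, 0; rewrite !mulr0 addr0; split=> //; apply: in_Rw0.
- move=> _ _ [a1 [b1 [ha1 hb1 ->]]] [a2 [b2 [ha2 hb2 ->]]].
  exists (a1 + a2), (b1 + b2); rewrite !mulrDr addrACA.
  by split=> //; apply: in_RwD.
- move=> m /hp /hX [a [b [ha hb ->]]]; exists (p@_m *: a), (p@_m *: b).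
  by rewrite scalerDr -!scalerAr; split=> //; apply: in_RwZ.
Qed.

End Rw.

Section OmegaFibres.
Variables (K : fieldType) (n : nat) (c : 'I_n -> int) (xis : 'I_n.-1 -> 'I_n -> nat).
Hypothesis c_neq0 : exists k, c k != 0.
Hypothesis xis_orth : forall i, \sum_(k < n) (xis i k)%:Z * c k = 0.
Hypothesis omega_line : forall m1 m2 : 'X_{1..n},
  (forall i, omega xis m1 i = omega xis m2 i) ->
  exists t : int, forall k, (m2 k)%:Z = (m1 k)%:Z + t * c k.

Lemma omega_cplus i : omega xis (cplus c) i = omega xis (cminus c) i.
Proof.
apply/eqP; rewrite -eqz_nat /omega !Posz_sum -subr_eq0 -sumrB -[X in _ == X](xis_orth i).
by apply/eqP/eq_bigr => k _; rewrite !PoszM -mulrBr cplus_cminusE.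
Qed.

Lemma omega_homogenize_mon r N j i : (j <= N)%N ->
  omega xis (homogenize_mon c r N j) i = (omega xis r i + omega xis (cminus c) i * N)%N.
Proof.
by move=> jN; rewrite !omegaD !omegaMn omega_cplus -mulnDr subnKC.
Qed.

Lemma homogenize_monE r N j k : (j <= N)%N ->
  (homogenize_mon c r N j k)%:Z = (r k)%:Z + (cminus c k * N)%:Z + j%:Z * c k.
Proof.
move=> jN; rewrite !mnmDE !mulmnE -cplus_cminusE -{2}(subnKC jN).
by rewrite !PoszD !PoszM; ring.
Qed.

Lemma in_Rw_mulX_homogenize y r N (f : {poly K}) :
  (forall i, (omega xis r i + omega xis (cminus c) i * N)%N = y i) ->
  in_Rw xis y ('X_[r] * homogenize c N f).
Proof.
by move=> ry m /msupp_mulX_homogenize [j jN ->] i; rewrite omega_homogenize_mon.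
Qed.

Definition cdot (m : 'X_{1..n}) : int := \sum_(k < n) c k * (m k)%:Z.

Lemma cdot_line (m1 m2 : 'X_{1..n}) (t : int) :
  (forall k, (m2 k)%:Z = (m1 k)%:Z + t * c k) ->
  cdot m2 = cdot m1 + t * \sum_(k < n) c k * c k.
Proof.
move=> h; rewrite /cdot mulr_sumr -big_split; apply: eq_bigr => k _ /=.
by rewrite h; ring.
Qed.

Lemma sum_sqr_gt0 : 0 < \sum_(k < n) c k * c k.
Proof.
have [k0 ck0] := c_neq0; rewrite (bigD1 k0) //= ltr_wpDr ?sumr_ge0 //.
  by move=> k _; rewrite -expr2 sqr_ge0.
by rewrite -expr2 exprn_even_gt0.
Qed.

(* [cdot] increases strictly along [c], so its extrema on the support are the endpoints. *)
Lemma Rw_support_segment y (F : {mpoly K[n]}) : in_Rw xis y F -> F != 0 ->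
  exists mlo N, [/\ mlo \in msupp F,
    (exists2 mhi, mhi \in msupp F & forall k, (mhi k)%:Z = (mlo k)%:Z + N%:Z * c k) &
    forall m, m \in msupp F ->
      exists2 t, (t <= N)%N & forall k, (m k)%:Z = (mlo k)%:Z + t%:Z * c k].
Proof.
move=> hF Fnz; have supp_ne : msupp F != [::].
  by apply: contra Fnz => /eqP /msuppnil0 ->.
have [mlo lo_in lo_min] := seq_argmin cdot supp_ne.
have [mhi hi_in hi_max] := seq_argmin (fun m => - cdot m) supp_ne.
have c2_gt0 := sum_sqr_gt0.
have shift m : m \in msupp F -> exists t : nat,
    (forall k, (m k)%:Z = (mlo k)%:Z + t%:Z * c k) /\
    cdot m = cdot mlo + t%:Z * \sum_(k < n) c k * c k.
  move=> mF; have [t ht] := omega_line (fun i => etrans (hF _ lo_in i) (esym (hF _ mF i))).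
  have e := cdot_line ht; have := lo_min _ mF; rewrite e lerDl pmulr_lge0 // => t0.
  by exists `|t|%N; rewrite gez0_abs.
have [N [hN eN]] := shift _ hi_in.
exists mlo, N; split=> //; first by exists mhi.
move=> m mF; have [t [ht et]] := shift _ mF; exists t => //.
by have := hi_max _ mF; rewrite lerN2 et eN lerD2l ler_pM2r // lez_nat.
Qed.

Lemma Rw_homogenize y (F : {mpoly K[n]}) : in_Rw xis y F -> F != 0 ->
  exists r N (f : {poly K}), [/\ size f = N.+1, f`_0 != 0,
    F = 'X_[r] * homogenize c N f &
    forall i, (omega xis r i + omega xis (cminus c) i * N)%N = y i].
Proof.
move=> hF Fnz.
have [mlo [N [lo_in [mhi hi_in hN] hsupp]]] := Rw_support_segment hF Fnz.
pose r := (mlo - cminus c *+ N)%MM.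
have mon_eq (m : 'X_{1..n}) j : (j <= N)%N -> (forall k, (m k)%:Z = (mlo k)%:Z + j%:Z * c k) ->
    m = homogenize_mon c r N j.
  move=> jN hm; apply/mnmP => k; apply/eqP; rewrite -eqz_nat hm homogenize_monE //.
  rewrite mnmBE mulmnE -PoszD subnK //; have := hN k.
  by case: (cplus_cminus_case c k) => -[_ e]; [rewrite e mul0n | nia].
have lo_eq : mlo = homogenize_mon c r N 0 by apply: mon_eq => // k; rewrite mul0r addr0.
pose f := \poly_(j < N.+1) F@_(homogenize_mon c r N j).
exists r, N, f; split.
- by apply: size_poly_eq; rewrite -(mon_eq _ _ _ hN) // -mcoeff_msupp.
- by rewrite coef_poly /= -lo_eq -mcoeff_msupp.
- apply/mpolyP => m.
  have [/existsP [j /eqP ->]|off] := boolP [exists j : 'I_N.+1, m == homogenize_mon c r N j].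
    by rewrite (mcoeff_mulX_homogenize c_neq0) ?coef_poly ?ltn_ord // -ltnS.
  rewrite !memN_msupp_eq0 //; apply/negP.
  + case/msupp_mulX_homogenize => j jN e.
    by case/existsP: off; exists (Ordinal (jN : j < N.+1)%N); rewrite e.
  + case/hsupp => j jN /(mon_eq _ _ jN) e.
    by case/existsP: off; exists (Ordinal (jN : j < N.+1)%N); rewrite e.
- by move=> i; rewrite -(hF _ lo_in i) lo_eq omega_homogenize_mon.
Qed.

Lemma no_monomial_factor_homogenize w (G : {mpoly K[n]}) :
  in_Rw xis w G -> no_monomial_factor G ->
  exists d (g : {poly K}), [/\ size g = d.+1, g`_0 != 0, G = homogenize c d g &
    forall j, w j = (omega xis (cminus c) j * d)%N].
Proof.
move=> hG nmf; have Gnz : G != 0.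
  have [k _] := c_neq0; apply/eqP => G0; apply: (nmf U_(k)%MM); first by rewrite mdeg1.
  by exists 0; rewrite G0 mulr0.
have [r [d [g [sg g0 eG ow]]]] := Rw_homogenize hG Gnz.
have r0 : r = 0%MM.
  apply/eqP; apply: contraT => rnz; case: (nmf r); first by rewrite lt0n mdeg_eq0.
  by exists (homogenize c d g).
exists d, g; split=> //; first by rewrite eG r0 mpolyX0 mul1r.
by move=> j; rewrite -ow r0 omega0.
Qed.

(* Put [m] and [eta + beta] on one segment of direction [c], solve
   [X^k = g A + X^s h B] in one variable, and homogenize back. *)
Lemma Rw_comb_monomial w z i d e (g h : {poly K}) eta beta m :
  (0 < d)%N -> size g = d.+1 -> g`_0 != 0 -> size h = e.+1 -> coprimep g h ->
  (forall j, w j = omega xis (cminus c) j * d)%N ->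
  (forall j, omega xis eta j + omega xis (cminus c) j * e = z j)%N ->
  (forall j, omega xis beta j = i j + omega xis (cminus c) j)%N ->
  (forall j, omega xis m j = w j + z j + i j)%N ->
  Rw_comb xis (homogenize c d g) ('X_[eta] * homogenize c e h)
    (fun j => z j + i j)%N (fun j => w j + i j)%N 'X_[m].
Proof.
move=> d_gt0 sg g0 sh cgh hw hz hbeta hm.
have [t ht] : exists t : int, forall k,
    (m k)%:Z = ((eta + beta + cminus c *+ (d.-1 + e))%MM k)%:Z + t * c k.
  apply: omega_line => j; rewrite !omegaD omegaMn hbeta hm hw -hz.
  by rewrite mulnDr -[in RHS](prednK d_gt0) mulnS; lia.
have [r [N [k [s [kN sN em eeb]]]]] := homogenize_frame ht.
have [A [B [sB eX hA]]] := Xn_decomp d_gt0 sg g0 (eq_leq sh) cgh kN sN.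
exists ('X_[r] * homogenize c (N - d) A), ('X_[beta] * homogenize c d.-1 B).
rewrite em; split; last exact: homogenize_lift d_gt0 sg (eq_leq sh) sB kN sN eX hA eeb.
- case: hA => [->|[dN _]]; first by rewrite raddf0 mulr0; apply: in_Rw0.
  apply: in_Rw_mulX_homogenize => j.
  have := hm j; rewrite em omega_homogenize_mon // hw -hz.
  move: (omega xis (cminus c) j) => x; have : (x * d <= x * N)%N by rewrite leq_mul2l dN orbT.
  rewrite mulnBr; lia.
- apply: in_Rw_mulX_homogenize => j; rewrite hbeta hw.
  by rewrite -[in RHS](prednK d_gt0) mulnS; lia.
Qed.

Lemma Rw_comb_coprime w z i (G H : {mpoly K[n]}) beta p :
  in_Rw xis w G -> in_Rw xis z H -> mcoprime G H -> no_monomial_factor G ->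
  (forall j, omega xis beta j = i j + omega xis (cminus c) j)%N ->
  in_Rw xis (fun j => w j + z j + i j)%N p ->
  Rw_comb xis G H (fun j => z j + i j)%N (fun j => w j + i j)%N p.
Proof.
move=> hG hH cop nmf hbeta; apply: Rw_comb_span => m hm.
have [d [g [sg g0 eG hw]]] := no_monomial_factor_homogenize hG nmf.
have [d0|d_gt0] := posnP d.
  exists ((g`_0)^-1 *: 'X_[m]), 0; split; last 1 first.
  - by rewrite mulr0 addr0 eG d0 homogenize0 mul_mpolyC scalerA mulfV ?scale1r.
  - by apply/in_RwZ/in_Rw_X => j; rewrite hm hw d0 muln0.
  - exact: in_Rw0.
have Hnz : H != 0.
  apply/eqP => H0; have /eqp_size : g %= 1.
    rewrite -coprimep0; apply: (homogenize_coprimep c_neq0 (eta := 0%MM) (e := 0%N) sg g0).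
      by rewrite size_poly0.
    by rewrite raddf0 mulr0 -eG -H0.
  by rewrite sg size_poly1 => -[d0]; rewrite d0 in d_gt0.
have [eta [e [h [sh _ eH hz]]]] := Rw_homogenize hH Hnz.
have cgh : coprimep g h.
  by apply: (homogenize_coprimep c_neq0 (eta := eta) sg g0 (eq_leq sh)); rewrite -eG -eH.
by rewrite eG eH; apply: Rw_comb_monomial.
Qed.

End OmegaFibres.

(* [k] separates the lower bounds [-alpha p / c p] (for [c p > 0]) from the upper
   bounds [alpha q / |c q| + 1] (for [c q < 0]); [alpha_pair] makes them compatible. *)
Lemma exists_nonneg_shift n (c alpha : 'I_n -> int) :
  (forall m, c m = 0 -> 0 <= alpha m) ->
  (forall p q, 0 < c p -> c q < 0 -> 0 <= - c q * alpha p + c p * alpha q) ->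
  exists k, forall m, 0 <= alpha m + (cminus c m)%:Z + k * c m.
Proof.
move=> alpha0 alpha_pair.
have [|k [lo hi]] := @int_between _ (fun p => 0 < c p) (fun q => c q < 0)
    (fun p => - (alpha p %/ c p)%Z) (fun q => (alpha q %/ - c q)%Z + 1).
  move=> p q /= cp cq; have := alpha_pair p q cp cq.
  rewrite -oppr_gt0 in cq; have := ltz_ceil (alpha p) cp; have := ltz_ceil (alpha q) cq.
  move: (alpha p %/ c p)%Z (alpha q %/ - c q)%Z (- c q) (c p) cp cq => A B d e e_gt0 d_gt0.
  move=> hB hA pair; rewrite -(ltr_pM2r d_gt0) in hA; rewrite -(ltr_pM2r e_gt0) in hB.
  nia.
exists k => m; rewrite /cminus mnmE; case: (ltrgtP (c m) 0) => cm /=.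
- rewrite ltz0_abs //; have := hi m cm; rewrite -oppr_gt0 in cm.
  have := lez_floor (alpha m) (lt0r_neq0 cm); nia.
- have := lo m cm; have := lez_floor (alpha m) (lt0r_neq0 cm); nia.
- by rewrite cm mulr0 !addr0 alpha0.
Qed.

Section DualCone.
Variables (R : realType) (n : nat) (E : ('I_n -> R) -> Prop) (c : 'I_n -> int).
Hypothesis c_par : parallel E c.

Lemma parallel_orth_to (xi : 'I_n -> R) :
  \sum_(k < n) xi k * (c k)%:~R = 0 -> orth_to E xi.
Proof.
move=> xi_c a b Ea Eb; have [t ht] := c_par Ea Eb.
rewrite /dotR (eq_bigr (fun k => - t * (xi k * (c k)%:~R))) -?mulr_sumr ?xi_c ?mulr0 //.
by move=> k _; rewrite -opprB ht mulrN mulNr mulrCA.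
Qed.

(* Test [inM] against the nonnegative vectors [a e_p + b e_q] orthogonal to [c]. *)
Lemma inM_pair_ge0 (alpha : 'I_n -> int) :
  (forall xi : 'I_n -> R, (forall k, 0 <= xi k) -> orth_to E xi ->
     0 <= \sum_(k < n) xi k * (alpha k)%:~R) ->
  forall p q (a b : int), 0 <= a -> 0 <= b -> a * c p + b * c q = 0 ->
  0 <= a * alpha p + b * alpha q.
Proof.
move=> alpha_ge0 p q a b a0 b0 abc.
pose xi k : R := a%:~R * (k == p)%:R + b%:~R * (k == q)%:R.
have xiE (y : 'I_n -> R) : \sum_(k < n) xi k * y k = a%:~R * y p + b%:~R * y q.
  rewrite -(sumr_pred1_mul p) -(sumr_pred1_mul q) !mulr_sumr -big_split.
  by apply: eq_bigr => k _; rewrite /xi /=; ring.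
rewrite -(ler0z R) rmorphD !rmorphM -(xiE (fun k => (alpha k)%:~R)); apply: alpha_ge0.
  by move=> k; rewrite addr_ge0 ?mulr_ge0 ?ler0z.
by apply: parallel_orth_to; rewrite xiE -!rmorphM -rmorphD abc.
Qed.

Lemma inM_omega_shift (xis : 'I_n.-1 -> 'I_n -> nat) i :
  (forall j, \sum_(k < n) (xis j k)%:Z * c k = 0) -> inM E xis i ->
  exists beta : 'X_{1..n}, forall j, omega xis beta j = (i j + omega xis (cminus c) j)%N.
Proof.
move=> xis_orth [alpha [alphaE alpha_ge0]].
have [k shift_ge0] : exists k, forall m, 0 <= alpha m + (cminus c m)%:Z + k * c m.
  apply: exists_nonneg_shift => [m cm0|p q cp cq].
    have := @inM_pair_ge0 alpha alpha_ge0 m m 1 0.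
    by rewrite cm0 !mulr0 mul0r !addr0 mul1r; apply.
  by apply: inM_pair_ge0 => //; rewrite ?oppr_ge0 ?ltW // mulNr mulrC addNr.
exists [multinom `|(alpha m + (cminus c m)%:Z + k * c m)%R|%N | m < n] => j.
apply/eqP; rewrite -eqz_nat; apply/eqP; rewrite PoszD /omega !Posz_sum -alphaE.
rewrite (eq_bigr (fun m => (xis j m)%:Z * alpha m + (xis j m)%:Z * (cminus c m)%:Z
                          + k * ((xis j m)%:Z * c m))) => [|m _]; last first.
  by rewrite mnmE PoszM gez0_abs //; ring.
by rewrite !big_split -mulr_sumr /= xis_orth mulr0 addr0.
Qed.

End DualCone.

Unset Implicit Arguments.

Theorem lemma2p5 (R : realType) (K : fieldType) (n : nat)
    (S : seq {ffun 'I_n -> nat}) (E : ('I_n -> R) -> Prop)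
    (c : 'I_n -> int) (xis : 'I_n.-1 -> 'I_n -> nat)
    (w z : 'I_n.-1 -> nat) (G H : {mpoly K[n]}) :
  S != [::] ->
  loose_edge (newton_polyhedron (R:=R) S) E ->
  primitive c -> parallel E c ->
  lin_indep R xis ->
  (forall i, \sum_(k < n) (xis i k)%:Z * c k = 0) ->
  in_Rw xis w G -> in_Rw xis z H ->
  mcoprime G H -> no_monomial_factor G ->
  forall i : 'I_n.-1 -> nat, inM E xis i ->
  forall p : {mpoly K[n]},
    in_Rw xis (fun j => (w j + z j + i j)%N) p <->
    exists a b : {mpoly K[n]},
      [/\ in_Rw xis (fun j => (z j + i j)%N) a,
          in_Rw xis (fun j => (w j + i j)%N) b & p = G * a + H * b].
Proof.
move=> _ _ c_prim c_par xis_li xis_orth hG hH cop nmf i iM p.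
have c_neq0 := primitive_neq0 c_prim.
have omega_line := omega_eq_line xis_li c_prim xis_orth.
have [beta hbeta] := inM_omega_shift c_par xis_orth iM.
split=> [|[a [b [ha hb ->]]]].
  move=> hp; exact (Rw_comb_coprime c_neq0 xis_orth omega_line hG hH cop nmf hbeta hp).
apply: in_RwD.
  by apply: in_Rw_eq (in_RwM hG ha) => j; rewrite addnA.
by apply: in_Rw_eq (in_RwM hH hb) => j; rewrite addnCA addnA.
Qed.
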